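(* For every finite set $J$, the signatures $\mathrm{Even}_J$, $\mathrm{Odd}_J$ and $\mathrm{NAE}_J$ are windable.
   Context: $\mathrm{Even}_J,\mathrm{Odd}_J,\mathrm{NAE}_J:\{0,1\}^J\to\{0,1\}$: $\mathrm{Even}_J(x)=1$ iff $\sum_ix_i$ is even; $\mathrm{Odd}_J(x)=1$ iff $\sum_ix_i$ is odd; $\mathrm{NAE}_J(x)=1$ iff $1\le\sum_ix_i\le|J|-1$. For $x,y\in\{0,1\}^J$, $x\oplus y$ is coordinatewise addition mod 2, and $\mathbf S$ is the characteristic vector of $S\subseteq J$. For $z\in\{0,1\}^J$, $\mathrm{Match}'(z)$ is the set of partitions of $\{i:z_i=1\}$ into blocks of size 1 or 2. $F:\{0,1\}^J\to\mathbb{Q}_{\ge0}$ is windable if there exist $B(x,y,M)\ge0$ for all $x,y\in\{0,1\}^J$ and $M\in\mathrm{Match}'(x\oplus y)$ with (1) $F(x)F(y)=\sum_{M\in\mathrm{Match}'(x\oplus y)}B(x,y,M)$ for all $x,y$, and (2) $B(x,y,M)=B(x\oplus\mathbf S,y\oplus\mathbf S,M)$ for all $x,y$ and all $S\in M\in\mathrm{Match}'(x\oplus y)$. *)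

From HB Require Import structures.
From mathcomp Require Import all_boot all_order all_algebra.
Set Implicit Arguments. Unset Strict Implicit. Unset Printing Implicit Defensive.
Import Order.TTheory GRing.Theory Num.Theory.

Local Open Scope ring_scope.

Definition bvec (J : finType) := {ffun J -> bool}.

Definition xorv (J : finType) (x y : bvec J) : bvec J := [ffun i => x i (+) y i].

Definition charv (J : finType) (S : {set J}) : bvec J := [ffun i => i \in S].

Definition weight (J : finType) (x : bvec J) : nat := #|[set i | x i]|.

Definition Even (J : finType) (x : bvec J) : rat :=
  if ~~ odd (weight x) then 1 else 0.
Definition Odd (J : finType) (x : bvec J) : rat :=
  if odd (weight x) then 1 else 0.
Definition NAE (J : finType) (x : bvec J) : rat :=
  if (1 <= weight x <= #|J| - 1)%N then 1 else 0.

Definition Match' (J : finType) (z : bvec J) : {set {set {set J}}} :=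
  [set M : {set {set J}} | partition M [set i | z i]
                          & [forall S in M, (#|S| == 1)%N || (#|S| == 2)%N]].

Definition windable (J : finType) (F : bvec J -> rat) : Prop :=
  (forall x, 0 <= F x) /\
  exists B : bvec J -> bvec J -> {set {set J}} -> rat,
    (forall x y M, M \in Match' (xorv x y) -> 0 <= B x y M) /\
    (forall x y, F x * F y = \sum_(M in Match' (xorv x y)) B x y M) /\
    (forall x y M S, M \in Match' (xorv x y) -> S \in M ->
        B x y M = B (xorv x (charv S)) (xorv y (charv S)) M).

From HB Require Import structures.
From mathcomp Require Import all_boot all_order all_algebra zify ring.
Set Implicit Arguments. Unset Strict Implicit. Unset Printing Implicit Defensive.
Import Order.TTheory GRing.Theory Num.Theory.

(* Write D = supp x y for the support of x (+) y.  For every even subset S of D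
   we fix a canonical matching [canon D S] in Match'(x (+) y): S is split into
   pairs and every point of D \ S is a singleton.  Then any nonnegative weight
   function w x y S yields a winding
       B x y M = \sum_(S even in D, M = canon D S) w x y S,
   provided (a) summing w over the even subsets of D gives F x * F y, and
   (b) w x y S is unchanged when x and y are both flipped on a block of
   canon D S ([windable_from_weights]).

   - Even/Odd: put all the weight G(x) G(y) on S = D (a perfect matching); D is
     even whenever the product is nonzero, and flipping a pair preserves parity.
   - NAE: if x is nonconstant outside D, put weight 1 on S = set0 (all
     singletons); otherwise spread weight 2/#|Ev D| over the even S in D on
     which x has odd parity.  Toggling a pair {i, j} of D with x i != x j shows
     that exactly half of the even subsets qualify ([count_par]), and a case
     analysis shows that NAE x * NAE y is the indicator that x is nonconstant
     outside D or inside D ([NAE_product]). *)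

Section BitVectors.
Variable J : finType.
Implicit Types (x y v : bvec J) (S : {set J}).

Lemma card_set_sum (p : pred J) : #|[set k | p k]| = (\sum_(k : J) p k)%N.
Proof.
rewrite -sum1_card big_mkcond /=; apply: eq_bigr => k _; rewrite inE.
by case: (p k).
Qed.

Lemma odd_card_addb (a b : pred J) :
  odd #|[set k | a k (+) b k]| = odd #|[set k | a k]| (+) odd #|[set k | b k]|.
Proof.
rewrite !card_set_sum !(big_morph _ oddD (erefl : odd 0 = false)) -big_split /=.
by apply: eq_bigr => k _; rewrite !oddb.
Qed.

Lemma weight_xor x y : odd (weight (xorv x y)) = odd (weight x) (+) odd (weight y).
Proof.
rewrite /weight -odd_card_addb.
by congr (odd _); apply: eq_card => i; rewrite !inE ffunE.
Qed.

Lemma weight_charv S : weight (charv S) = #|S|.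
Proof. by apply: eq_card => i; rewrite !inE ffunE. Qed.

Definition supp x y : {set J} := [set i | xorv x y i].

Lemma xorv_flip x y v : xorv (xorv x v) (xorv y v) = xorv x y.
Proof. by apply/ffunP => i; rewrite !ffunE; case: (x i); case: (y i); case: (v i). Qed.

Lemma supp_flip x y v : supp (xorv x v) (xorv y v) = supp x y.
Proof. by rewrite /supp xorv_flip. Qed.

Definition par x S : bool := odd #|[set k in S | x k]|.

Lemma par_xor x y S : par (xorv x y) S = par x S (+) par y S.
Proof.
rewrite /par -(odd_card_addb (fun k => (k \in S) && x k) (fun k => (k \in S) && y k)).
by congr (odd _); apply: eq_card => k; rewrite !inE ffunE; case: (k \in S).
Qed.

End BitVectors.

Section Matchings.
Variable J : finType.
Implicit Types (x y : bvec J) (D S B : {set J}) (M : {set {set J}}).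

Definition Ev D : {set {set J}} := [set S : {set J} | (S \subset D) && ~~ odd #|S|].

Lemma set0_Ev D : set0 \in Ev D.
Proof. by rewrite inE sub0set cards0. Qed.

Definition adapted D S M : bool :=
  partition M D &&
  [forall B in M, ((#|B| == 2) && (B \subset S)) || ((#|B| == 1) && (B \subset D :\: S))].

Lemma singletons_partition D : partition [set [set i] | i in D] D.
Proof.
have n0 : set0 \notin [set [set i] | i in D].
  by apply/imsetP => -[i _] /esym/eqP; rewrite -cards_eq0 cards1.
apply/and3P; split => //.
- rewrite cover_imset; apply/eqP/setP => k; apply/bigcupP/idP => [[i iD]|kD].
    by rewrite inE => /eqP ->.
  by exists k; rewrite ?inE.
- case: (@trivIimset _ _ (mem D) (fun i => [set i])) => // i j _ _ ji.
  by rewrite disjoints1 inE eq_sym.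
Qed.

(* An adapted partition exists for every even [S] in [D]: pair off [S] two
   points at a time (induction on #|S|/2) and use singletons on [D :\: S]. *)
Lemma adapted_exists D S : S \in Ev D -> exists M, adapted D S M.
Proof.
rewrite inE => /andP [sSD evS].
have [n cardS] : exists n, #|S| = n.*2.
  by exists #|S|./2; have := odd_double_half #|S|; rewrite (negbTE evS).
elim: n D S sSD cardS {evS} => [|n IH] D S sSD cardS.
  exists [set [set i] | i in D]; rewrite /adapted singletons_partition /=.
  move/eqP: cardS; rewrite cards_eq0 => /eqP ->.
  by apply/forall_inP => _ /imsetP [i iD ->]; rewrite cards1 setD0 /= sub1set iD.
have : (1 < #|S|)%N by rewrite cardS doubleS.
case/card_gt1P => i [j [iS jS ij]].
set P := [set i; j].
have sPS : P \subset S by rewrite subUset !sub1set iS jS.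
have sPD : P \subset D := subset_trans sPS sSD.
have cardS' : #|S :\: P| = n.*2 by rewrite cardsDS // cards2 ij cardS; lia.
have [M' /andP [partM' blocksM']] := IH (D :\: P) (S :\: P) (setSD P sSD) cardS'.
exists (P |: M'); apply/andP; split.
  have -> : D = P :|: (D :\: P).
    by rewrite setDE setUIr setUCr setIT (setUidPr sPD).
  apply: partitionU1 => //; first by apply/set0Pn; exists i; rewrite !inE eqxx.
  by rewrite disjoint_sym disjoints_subset subsetDr.
apply/forall_inP => B /setU1P [->|BM'].
  by rewrite cards2 ij sPS.
case/orP: (forall_inP blocksM' B BM') => /andP [cardB sB].
  by rewrite cardB (subset_trans sB) ?subsetDl.
apply/orP; right; rewrite cardB /=; apply: subset_trans sB _.
apply/subsetP => k /setDP [/setDP [kD kP] kS']; rewrite inE kD andbT.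
by apply: contra kS' => kS; rewrite inE kS kP.
Qed.

Definition canon D S : {set {set J}} := odflt set0 [pick M | adapted D S M].

Lemma canonP D S : S \in Ev D -> adapted D S (canon D S).
Proof.
case/adapted_exists => M adM; rewrite /canon.
by case: pickP => [M' //|/(_ M)]; rewrite adM.
Qed.

Lemma canon_block D S B : S \in Ev D -> B \in canon D S ->
  ((#|B| == 2) && (B \subset S)) || ((#|B| == 1) && (B \subset D :\: S)).
Proof. by case/canonP/andP => _ /forall_inP; apply. Qed.

Lemma canon_sub D S B : S \in Ev D -> B \in canon D S -> B \subset D.
Proof. by case/canonP/andP => partM _; apply: partitionS. Qed.

Lemma canon_full_block D B : D \in Ev D -> B \in canon D D -> #|B| = 2.
Proof.
move=> evD /(canon_block evD); rewrite setDv subset0.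
by case/orP => /andP [/eqP cB /eqP B0] //; move: cB; rewrite B0 cards0.
Qed.

Lemma canon_Match x y S :
  S \in Ev (supp x y) -> canon (supp x y) S \in Match' (xorv x y).
Proof.
move=> evS; case/andP: (canonP evS) => partM _; rewrite inE partM /=.
apply/forall_inP => B /(canon_block evS).
by case/orP => /andP [-> _]; rewrite ?orbT.
Qed.

End Matchings.

Local Open Scope ring_scope.

Section Weights.
Variable J : finType.
Implicit Types (x y : bvec J) (S T : {set J}).

Definition flip_invariant (w : bvec J -> bvec J -> {set J} -> rat) : Prop :=
  forall x y S T, S \in Ev (supp x y) -> T \in canon (supp x y) S ->
    w x y S = w (xorv x (charv T)) (xorv y (charv T)) S.

Lemma windable_from_weights (F : bvec J -> rat) (w : bvec J -> bvec J -> {set J} -> rat) :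
  (forall x, 0 <= F x) -> (forall x y S, 0 <= w x y S) ->
  (forall x y, F x * F y = \sum_(S in Ev (supp x y)) w x y S) ->
  flip_invariant w -> windable F.
Proof.
move=> F0 w0 Fw winv; split=> //.
exists (fun x y M => \sum_(S in Ev (supp x y)) (M == canon (supp x y) S)%:R * w x y S).
split; [|split].
- by move=> x y M _; apply: sumr_ge0 => S _; rewrite mulr_ge0.
- move=> x y; rewrite Fw exchange_big /=; apply: eq_bigr => S evS.
  rewrite (bigD1 (canon (supp x y) S)) ?canon_Match //= eqxx mul1r big1 ?addr0 //.
  by move=> M /andP [_ /negbTE ->]; rewrite mul0r.
- move=> x y M T _ TM; rewrite supp_flip; apply: eq_bigr => S evS.
  have [eqM | _] := eqVneq M (canon (supp x y) S); last by rewrite !mul0r.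
  by rewrite (winv x y S T) // -eqM.
Qed.

End Weights.

Section ParitySignatures.
Variable J : finType.

(* Signatures depending only on the parity of the weight, and vanishing on
   pairs of different parities, are windable: put all the weight on the
   perfect matching [canon D D]; flipping one of its pairs preserves parity. *)
Lemma parity_windable (G : bool -> rat) :
  (forall b, 0 <= G b) -> (forall b c, G b * G c != 0 -> b = c) ->
  windable (fun x : bvec J => G (odd (weight x))).
Proof.
move=> G0 GG.
pose w (x y : bvec J) (S : {set J}) := G (odd (weight x)) * G (odd (weight y)) * (S == supp x y)%:R.
apply: (@windable_from_weights J _ w) => // [x y S | x y | x y S T evS TS].
- by rewrite !mulr_ge0.
- have [Gxy0 | nz] := eqVneq (G (odd (weight x)) * G (odd (weight y))) 0.
    by rewrite Gxy0 big1 // => S _; rewrite /w Gxy0 mul0r.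
  have evD : supp x y \in Ev (supp x y).
    by rewrite inE subxx -[#|_|]/(weight (xorv x y)) weight_xor (GG _ _ nz) addbb.
  rewrite (bigD1 (supp x y)) //= big1 ?addr0 ?/w ?eqxx ?mulr1 // => S /andP [_ /negbTE ->].
  by rewrite mulr0.
- rewrite /w supp_flip; have [eqS | _] := eqVneq S (supp x y); last by rewrite !mulr0.
  move: evS TS; rewrite eqS => evD /(canon_full_block evD) cardT.
  by rewrite !weight_xor weight_charv cardT !addbF.
Qed.

End ParitySignatures.

Section Halving.
Variable J : finType.
Implicit Types (x : bvec J) (D S P : {set J}).

(* Symmetric difference with [P]; toggling a pair is the halving involution. *)
Definition toggle P S : {set J} := [set k | (k \in S) (+) (k \in P)].

Lemma toggleK P : involutive (toggle P).
Proof. by move=> S; apply/setP => k; rewrite !inE addbK. Qed.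

Lemma odd_card_toggle P S : odd #|toggle P S| = odd #|S| (+) odd #|P|.
Proof.
rewrite odd_card_addb; congr (odd _ (+) odd _); apply: eq_card => k; by rewrite inE.
Qed.

Lemma par_toggle x P S : par x (toggle P S) = par x S (+) par x P.
Proof.
rewrite /par -odd_card_addb; congr (odd _); apply: eq_card => k.
by rewrite !inE; case: (x k); rewrite ?andbT ?andbF.
Qed.

Lemma par_pair x i j : x i != x j -> par x [set i; j].
Proof.
move=> xij; rewrite /par (_ : [set k in [set i; j] | x k] = [set if x i then i else j]).
  by rewrite cards1.
have xj : x j = ~~ x i by move: xij; case: (x i); case: (x j).
have ij : i != j by apply: contraNneq xij => ->.
apply/setP => k; rewrite !inE; have [->|ki] := eqVneq k i.
  by case: (x i); rewrite ?eqxx ?(negbTE ij).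
have [->|kj] := eqVneq k j.
  by rewrite xj; case: (x i); rewrite ?eqxx // eq_sym (negbTE ij).
by case: (x i); rewrite ?(negbTE ki) ?(negbTE kj).
Qed.

Lemma toggle_pair_Ev D i j S : i \in D -> j \in D -> i != j -> S \in Ev D ->
  toggle [set i; j] S \in Ev D.
Proof.
move=> iD jD ij; rewrite !inE => /andP [sSD evS]; apply/andP; split.
  apply/subsetP => k; rewrite inE; case: (boolP (k \in S)) => [kS _ | _ /set2P [->|->] //].
  exact: subsetP sSD k kS.
by rewrite odd_card_toggle cards2 ij (negbTE evS).
Qed.

(* If [x] is nonconstant on [D], exactly half of the even subsets of [D] have
   odd [x]-parity: toggling a pair {i, j} with x i != x j swaps the two halves. *)
Lemma count_par x D i j : i \in D -> j \in D -> x i != x j ->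
  (#|[set S in Ev D | par x S]| * 2 = #|Ev D|)%N.
Proof.
move=> iD jD xij; have ij : i != j by apply: contraNneq xij => ->.
have flip b : (#|[set S in Ev D | par x S == b]|
                <= #|[set S in Ev D | par x S == ~~ b]|)%N.
  rewrite -(card_imset _ (can_inj (toggleK [set i; j]))).
  apply/subset_leq_card/subsetP => _ /imsetP [S /setIdP [evS /eqP pS] ->].
  by rewrite inE toggle_pair_Ev // par_toggle par_pair // pS addbT eqxx.
have -> : #|Ev D| = (#|[set S in Ev D | par x S == true]|
                      + #|[set S in Ev D | par x S == false]|)%N.
  rewrite -(cardsID [set S | par x S] (Ev D)); congr (_ + _)%N; apply: eq_card => S.
    by rewrite !inE eqb_id.
  by rewrite !inE eqbF_neg andbC.
have -> : [set S in Ev D | par x S] = [set S in Ev D | par x S == true].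
  by apply/setP => S; rewrite !inE eqb_id.
by rewrite muln2 -addnn; congr (_ + _)%N; apply/eqP; rewrite eqn_leq (flip true) (flip false).
Qed.

End Halving.

Section NonConstant.
Variable J : finType.
Implicit Types (x v w : bvec J) (A D S : {set J}).

Definition nonconst v A : bool := [exists i in A, exists j in A, v i != v j].

Lemma nonconstPn v A : ~~ nonconst v A -> {in A &, forall i j, v i = v j}.
Proof.
move=> cA i j iA jA; apply/eqP; apply: contraNT cA => vij.
by apply/exists_inP; exists i => //; apply/exists_inP; exists j.
Qed.

Lemma nonconstS v A D : A \subset D -> nonconst v A -> nonconst v D.
Proof.
move=> sAD /exists_inP [i iA /exists_inP [j jA vij]].
apply/exists_inP; exists i; rewrite ?(subsetP sAD) //.
by apply/exists_inP; exists j; rewrite ?(subsetP sAD).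
Qed.

Lemma nonconst_addb v w A b : {in A, forall k, w k = v k (+) b} ->
  nonconst w A = nonconst v A.
Proof.
move=> wv; apply/exists_inP/exists_inP => -[i iA /exists_inP [j jA ij]];
  exists i => //; apply/exists_inP; exists j => //;
  by move: ij; rewrite !wv // (inj_eq (@addIb b)).
Qed.

(* If [v] is constant on [D] and on its complement, then [v (+) 1_D] is constant
   as soon as [v] is not: the two constant values must be opposite. *)
Lemma nonconst_two_blocks v w D : (forall k, w k = v k (+) (k \in D)) ->
  ~~ nonconst v D -> ~~ nonconst v (~: D) -> nonconst v setT -> ~~ nonconst w setT.
Proof.
move=> wv cD cDc /exists_inP [i _ /exists_inP [j _ vij]].
have same k l : (k \in D) = (l \in D) -> v k = v l.
  move=> kl; case kD: (k \in D).
    by apply: (nonconstPn cD); rewrite -?kl.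
  by apply: (nonconstPn cDc); rewrite inE -?kl kD.
have ijD : (i \in D) != (j \in D) by apply: contraNneq vij => /same ->.
have wk k : w k = v i (+) (i \in D).
  rewrite wv; have [eki | nki] := eqVneq (k \in D) (i \in D).
    by rewrite (same k i eki) eki.
  have ekj : (k \in D) = (j \in D).
    by move: nki ijD; case: (k \in D); case: (i \in D); case: (j \in D).
  rewrite (same k j) // ekj; move: vij ijD.
  by case: (v i); case: (v j); case: (i \in D); case: (j \in D).
by apply/exists_inP => -[k _ /exists_inP [l _]]; rewrite !wk eqxx.
Qed.

Lemma nonconst_par x D S : ~~ nonconst x D -> S \in Ev D -> par x S = false.
Proof.
move=> cD; rewrite inE => /andP [sSD evS].
have [-> | [k kS]] := set_0Vmem S.
  rewrite /par; suff -> : [set k in set0 | x k] = set0 by rewrite cards0.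
  by apply/setP => k; rewrite !inE.
have xS l : l \in S -> x l = x k by move=> lS; apply: (nonconstPn cD); rewrite ?(subsetP sSD).
rewrite /par (_ : [set l in S | x l] = if x k then S else set0).
  by case: (x k); rewrite ?cards0 // (negbTE evS).
apply/setP => l; rewrite inE; have [lS | nlS] := boolP (l \in S).
  by rewrite xS //; case: (x k); rewrite ?inE ?lS.
by case: (x k); rewrite ?inE ?(negbTE nlS).
Qed.

End NonConstant.

Lemma sum_indicator (T : finType) (A : {set T}) (p : pred T) :
  \sum_(t in A) ((p t)%:R : rat) = #|[set t in A | p t]|%:R.
Proof.
rewrite (eq_bigr (fun t => if p t then 1 else 0)); last by move=> t _; case: (p t).
rewrite -big_mkcondr /= (eq_bigl (mem [set t in A | p t])) ?sumr_const //.
by move=> t; rewrite !inE.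
Qed.

Section NAESignature.
Variable J : finType.
Implicit Types (x y : bvec J) (D S T : {set J}).

Lemma NAE_nonconst x : NAE x = (nonconst x setT)%:R.
Proof.
rewrite /NAE /weight; set A := [set i | x i].
have -> : nonconst x setT = (0 < #|A|)%N && (0 < #|~: A|)%N.
  apply/exists_inP/andP => [[i _ /exists_inP [j _ xij]] | [/card_gt0P [i iA] /card_gt0P [j jA]]].
    have xj : x j = ~~ x i by move: xij; case: (x i); case: (x j).
    by case xi: (x i); split; apply/card_gt0P; [exists i | exists j | exists j | exists i];
      rewrite !inE ?xj ?xi.
  by exists i => //; apply/exists_inP; exists j => //; move: iA jA; rewrite !inE => -> /negbTE ->.
have cardA := cardsC A.
have -> : (1 <= #|A| <= #|J| - 1)%N = (0 < #|A|)%N && (0 < #|~: A|)%N by lia.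
by case: (_ && _).
Qed.

(* Flipping a canonical block [T] does not change the [x]-parity of [S]: a pair
   meets [S] in two points, a singleton outside [S] in none. *)
Lemma par_canon_block D S T : S \in Ev D -> T \in canon D S -> par (charv T) S = false.
Proof.
move=> evS /(canon_block evS) blockT; rewrite /par.
have -> : [set k in S | charv T k] = S :&: T by apply/setP => k; rewrite !inE ffunE.
case/orP: blockT => /andP [/eqP cardT sT]; first by rewrite (setIidPr sT) cardT.
suff -> : S :&: T = set0 by rewrite cards0.
apply/setP => k; rewrite !inE; apply/negbTE/andP => -[kS kT].
by move: (subsetP sT k kT); rewrite inE kS.
Qed.

Lemma sum_par_weight x D :
  \sum_(S in Ev D) (2 / #|Ev D|%:R : rat) * (par x S)%:R = (nonconst x D)%:R.
Proof.
rewrite -mulr_sumr sum_indicator.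
have [/exists_inP [i iD /exists_inP [j jD xij]] | cD] := boolP (nonconst x D).
  have count := count_par iD jD xij.
  have c0 : #|[set S in Ev D | par x S]|%:R != 0 :> rat.
    rewrite pnatr_eq0 -lt0n -(ltn_pmul2r (isT : 0 < 2)%N) count mul0n.
    by apply/card_gt0P; exists set0; apply: set0_Ev.
  by rewrite -count natrM /=; field.
suff -> : [set S in Ev D | par x S] = set0 by rewrite cards0 mulr0.
apply/setP => S; rewrite inE in_set0; apply/negbTE/andP => -[evS].
by rewrite (nonconst_par cD evS).
Qed.

(* [NAE x * NAE y] is the indicator that [x] is nonconstant outside or inside
   the support; [y] is [x] outside and [~~ x] inside the support. *)
Lemma NAE_product x y :
  NAE x * NAE y = (nonconst x (~: supp x y) || nonconst x (supp x y))%:R.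
Proof.
have yx k : y k = x k (+) (k \in supp x y) by rewrite inE ffunE; case: (x k); case: (y k).
have y_out : {in ~: supp x y, forall k, y k = x k (+) false}.
  by move=> k; rewrite inE yx => /negbTE ->.
have y_in : {in supp x y, forall k, y k = x k (+) true} by move=> k kD; rewrite yx kD.
rewrite !NAE_nonconst -natrM; congr _%:R.
have both (A : {set J}) b : {in A, forall k, y k = x k (+) b} -> nonconst x A ->
    (nonconst x setT * nonconst y setT)%N = 1%N.
  move=> yA nxA; have nyA : nonconst y A by rewrite (nonconst_addb yA).
  by rewrite !(nonconstS (subsetT A)).
case out: (nonconst x (~: supp x y)); first exact: both y_out out.
case inn: (nonconst x (supp x y)); first exact: both y_in inn.
case nx: (nonconst x setT) => //=.
suff /negbTE -> : ~~ nonconst y setT by [].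
by apply: nonconst_two_blocks yx _ _ nx; rewrite ?out ?inn.
Qed.

Definition nae_weight x y S : rat :=
  if nonconst x (~: supp x y) then (S == set0)%:R
  else 2 / #|Ev (supp x y)|%:R * (par x S)%:R.

(* NAE is windable: [nae_weight] is flip invariant since flips happen inside the
   support and preserve [par x S] ([par_canon_block]). *)
Lemma NAE_windable : windable (@NAE J).
Proof.
apply: (@windable_from_weights _ _ nae_weight).
- by move=> x; rewrite NAE_nonconst.
- move=> x y S; rewrite /nae_weight; case: ifP => _ //.
  by apply: mulr_ge0 => //; apply: divr_ge0.
- move=> x y; rewrite NAE_product /nae_weight.
  case: (nonconst x (~: supp x y)) => /=; last by rewrite sum_par_weight.
  rewrite (bigD1 set0) ?set0_Ev //= eqxx big1 ?addr0 // => S /andP [_].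
  by move/negbTE ->.
- move=> x y S T evS TS; have sTD := canon_sub evS TS.
  have xT : {in ~: supp x y, forall k, xorv x (charv T) k = x k (+) false}.
    move=> k; rewrite inE => kD; rewrite !ffunE.
    by rewrite (negbTE (contra (subsetP sTD k) kD)).
  rewrite /nae_weight supp_flip (nonconst_addb xT).
  by rewrite par_xor (par_canon_block evS TS) addbF.
Qed.

End NAESignature.

Theorem lemma10 (J : finType) :
  windable (@Even J) /\ windable (@Odd J) /\ windable (@NAE J).
Proof.
split; [|split].
- by apply: (@parity_windable J (fun b => if ~~ b then 1 else 0)); case => //; case.
- by apply: (@parity_windable J (fun b => if b then 1 else 0)); case => //; case.
- exact: NAE_windable.
Qed.
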